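(* If there exists a natural number $n>60$ with $\sigma(n)\ge\exp(H_n)\log(H_n)$ (a counterexample to the Kaneko–Lagarias inequality), then the smallest such counterexample is a superabundant number. Consequently, the Kaneko–Lagarias inequality $\sigma(n)<\exp(H_n)\log(H_n)$ holds for all $n>60$ if and only if it holds for all superabundant $n>60$.
   Context: $\sigma(n)=\sum_{d\mid n}d$ is the sum-of-divisors function and $H_n=1+\frac12+\cdots+\frac1n$ is the $n$-th harmonic number. A natural number $n$ is superabundant if $\sigma(m)/m<\sigma(n)/n$ for all natural numbers $m<n$. *)

From Stdlib Require Import Reals Lra Lia List.
Open Scope R_scope.

Definition sigma (n : nat) : nat :=
  fold_right Nat.add 0%nat
    (filter (fun d => Nat.eqb (Nat.modulo n d) 0) (seq 1 n)).

Fixpoint harmonic (n : nat) : R :=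
  match n with
  | O => 0
  | S k => harmonic k + / INR (S k)
  end.

Definition KL (n : nat) : Prop :=
  INR (sigma n) < exp (harmonic n) * ln (harmonic n).

Definition superabundant (n : nat) : Prop :=
  (1 <= n)%nat /\
  forall m : nat, (1 <= m < n)%nat ->
    INR (sigma m) / INR m < INR (sigma n) / INR n.

(* Let r(n) = exp(H_n) log(H_n) / n, so that the Kaneko-Lagarias inequality at n
   reads sigma(n)/n < r(n).  As long as H_n^2 <= n (true for n >= 7), going from n
   to n+1 multiplies exp(H_n) by at least 1 + 1/(n+1) and raises log(H_n) enough to
   pay for the factor n/(n+1), so r is nondecreasing from 7 on.  If n0 > 60 is the
   least counterexample, then sigma(m)/m < r(m) <= r(n0) <= sigma(n0)/n0 for
   60 < m < n0.  The remaining m are handled numerically: sigma(n)/n <= 2.71 < r(61)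
   for 61 <= n <= 99, so n0 >= 100, and sigma(m)/m <= 14/5 < r(100) for m <= 60.
   The numerical values of exp come from (1 + x/2^k)^(2^k) <= e^x, evaluated in Q
   by k squarings. *)

From Stdlib Require Import Reals Lra Lia QArith Qreals Qround Qminmax List.
(* Imported last so that [sigma] is the divisor sum, not [Rsigma.sigma]. *)
Open Scope R_scope.

Lemma exp_le_exp x y : x <= y -> exp x <= exp y.
Proof.
  intros [Hlt | ->]; [left; apply exp_increasing, Hlt | apply Rle_refl].
Qed.

Lemma ln_le_ln x y : 0 < x -> x <= y -> ln x <= ln y.
Proof.
  intros Hx [Hlt | ->]; [left; apply ln_increasing; assumption | apply Rle_refl].
Qed.

Lemma ln_le_sub_1 x : 0 < x -> ln x <= x - 1.
Proof. intros Hx; pose proof (exp_ineq1_le (ln x)) as H; rewrite exp_ln in H; lra. Qed.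

Lemma ln_sub_ln_ge x y : 0 < x -> 0 < y -> 1 - x / y <= ln y - ln x.
Proof.
  intros Hx Hy.
  assert (Hxy : 0 < x / y) by (apply Rdiv_lt_0_compat; assumption).
  pose proof (ln_le_sub_1 _ Hxy) as H.
  unfold Rdiv in H; rewrite ln_mult, ln_Rinv in H; try assumption.
  - unfold Rdiv; lra.
  - apply Rinv_0_lt_compat, Hy.
Qed.

Lemma le_ln_of_exp_le c x : 0 < x -> exp c <= x -> c <= ln x.
Proof. intros Hx Hc. rewrite <- (ln_exp c). apply ln_le_ln; [apply exp_pos | exact Hc]. Qed.

Lemma exp_half_sq x : exp (x / 2) * exp (x / 2) = exp x.
Proof. rewrite <- exp_plus; f_equal; field. Qed.

Definition Qround_down (q : Q) : Q :=
  Qmax 0 (inject_Z (Qfloor (q * inject_Z (10 ^ 15))) / inject_Z (10 ^ 15)).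

Lemma Qround_down_spec (q : Q) (r : R) :
  Q2R q <= r -> 0 <= r -> 0 <= Q2R (Qround_down q) <= r.
Proof.
  intros Hq Hr; unfold Qround_down.
  set (y := (inject_Z (Qfloor (q * inject_Z (10 ^ 15))) / inject_Z (10 ^ 15))%Q).
  assert (Hy : (y <= q)%Q)
    by (apply Qle_shift_div_r; [reflexivity | apply Qfloor_le]).
  apply Qle_Rle in Hy.
  assert (HQ0 : Q2R 0 = 0) by (unfold Q2R; simpl; field).
  destruct (Q.max_spec 0 y) as [[Hlt Heq] | [_ Heq]]; rewrite (Qeq_eqR _ _ Heq).
  - apply Qlt_Rlt in Hlt; lra.
  - lra.
Qed.

(* (1 + x/2^k)^(2^k) computed by k squarings, rounding each base down to a
   nonnegative multiple of 10^-15 so that the numbers stay small. *)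
Fixpoint exp_lower (k : nat) (x : Q) : Q :=
  match k with
  | O => 1 + x
  | S k => let a := Qround_down (exp_lower k (x / 2)) in a * a
  end%Q.

Lemma exp_lower_le k x : Q2R (exp_lower k x) <= exp (Q2R x).
Proof.
  revert x; induction k as [|k IH]; intros x; simpl exp_lower.
  - rewrite Q2R_plus; replace (Q2R 1) with 1 by (unfold Q2R; simpl; field).
    apply exp_ineq1_le.
  - assert (Hhalf : Q2R (x / 2) = Q2R x / 2)
      by (rewrite Q2R_div by discriminate; unfold Q2R at 2; simpl; field).
    destruct (Qround_down_spec _ (exp (Q2R x / 2)) ltac:(rewrite <- Hhalf; apply IH)
      ltac:(left; apply exp_pos)) as [Ha0 Ha].
    rewrite Q2R_mult, <- exp_half_sq.
    apply Rmult_le_compat; assumption.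
Qed.

Lemma le_exp_of_exp_lower (c x : Q) (k : nat) :
  Qle_bool c (exp_lower k x) = true -> Q2R c <= exp (Q2R x).
Proof.
  intros Hc; apply Qle_bool_iff, Qle_Rle in Hc.
  eapply Rle_trans; [exact Hc | apply exp_lower_le].
Qed.

Lemma exp_le_of_mul_exp_opp_ge a x : 1 <= a * exp (- x) -> exp x <= a.
Proof.
  intros H; rewrite exp_Ropp in H; pose proof (exp_pos x).
  replace a with (a * / exp x * exp x) by (field; lra).
  rewrite <- (Rmult_1_l (exp x)) at 1.
  apply Rmult_le_compat_r; lra.
Qed.

Lemma exp_4695_ge : 108 <= exp (4695/1000).
Proof.
  pose proof (le_exp_of_exp_lower 108 (4695#1000) 10 ltac:(vm_compute; reflexivity)) as H.
  unfold Q2R in H; simpl in H; lra.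
Qed.

Lemma exp_1545_le : exp (1545/1000) <= 4695/1000.
Proof.
  apply exp_le_of_mul_exp_opp_ge.
  pose proof (le_exp_of_exp_lower (1000#4695) (-1545#1000) 10 ltac:(vm_compute; reflexivity)) as H.
  unfold Q2R in H; simpl in H.
  replace (IZR (-1545) * / 1000) with (- (1545/1000)) in H by lra; lra.
Qed.

Lemma exp_518_ge : 175 <= exp (518/100).
Proof.
  pose proof (le_exp_of_exp_lower 175 (518#100) 10 ltac:(vm_compute; reflexivity)) as H.
  unfold Q2R in H; simpl in H; lra.
Qed.

Lemma exp_164_le : exp (164/100) <= 518/100.
Proof.
  apply exp_le_of_mul_exp_opp_ge.
  pose proof (le_exp_of_exp_lower (100#518) (-164#100) 10 ltac:(vm_compute; reflexivity)) as H.
  unfold Q2R in H; simpl in H.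
  replace (IZR (-164) * / 100) with (- (164/100)) in H by lra; lra.
Qed.

Lemma harmonic_S n : harmonic (S n) = harmonic n + / INR (S n).
Proof. reflexivity. Qed.

Lemma harmonic_ge_1 n : (1 <= n)%nat -> 1 <= harmonic n.
Proof.
  induction n as [|n IH]; intros Hn; [lia|].
  rewrite harmonic_S; destruct n as [|n].
  - simpl; rewrite Rinv_1; lra.
  - assert (0 < / INR (S (S n))) by (apply Rinv_0_lt_compat, lt_0_INR; lia).
    specialize (IH ltac:(lia)); lra.
Qed.

Lemma Q2R_inject_Z_of_nat n : Q2R (inject_Z (Z.of_nat n)) = INR n.
Proof. unfold Q2R, inject_Z; cbn [Qnum Qden]; rewrite INR_IZR_INZ, Rinv_1; ring. Qed.

Fixpoint harmonicQ (n : nat) : Q :=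
  match n with
  | O => 0
  | S k => Qred (harmonicQ k + / inject_Z (Z.of_nat (S k)))
  end.

Lemma Q2R_harmonicQ n : Q2R (harmonicQ n) = harmonic n.
Proof.
  induction n as [|n IH]; [unfold Q2R; simpl; lra|].
  rewrite harmonic_S; change (harmonicQ (S n))
    with (Qred (harmonicQ n + / inject_Z (Z.of_nat (S n)))).
  rewrite (Qeq_eqR _ _ (Qred_correct _)), Q2R_plus, Q2R_inv, IH,
    Q2R_inject_Z_of_nat; [reflexivity|].
  unfold Qeq; simpl; lia.
Qed.

Lemma harmonic_sq_7 : harmonic 7 ^ 2 <= INR 7.
Proof.
  replace (harmonic 7 ^ 2) with (Q2R (harmonicQ 7 * harmonicQ 7))
    by (rewrite Q2R_mult, Q2R_harmonicQ; ring).
  replace (INR 7) with (Q2R 7) by (unfold Q2R; simpl; lra).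
  apply Qle_Rle; vm_compute; discriminate.
Qed.

Lemma harmonic_61_ge : 4695/1000 <= harmonic 61.
Proof.
  rewrite <- Q2R_harmonicQ.
  replace (4695/1000) with (Q2R (4695#1000)) by (unfold Q2R; simpl; lra).
  apply Qle_Rle; vm_compute; discriminate.
Qed.

Lemma harmonic_100_ge : 518/100 <= harmonic 100.
Proof.
  rewrite <- Q2R_harmonicQ.
  replace (518/100) with (Q2R (518#100)) by (unfold Q2R; simpl; lra).
  apply Qle_Rle; vm_compute; discriminate.
Qed.

(* Given H_n^2 <= n, the step reduces to 2 H_n (n+1) + 1 <= (n+1)^2, and
   2 H_n (n+1) <= 2 H_n^2 + (n+1)^2/2 <= 2 n + (n+1)^2/2 suffices once n >= 3. *)
Lemma harmonic_sq_le n : (7 <= n)%nat -> harmonic n ^ 2 <= INR n.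
Proof.
  induction n as [|n IH]; intros Hn; [lia|].
  destruct (Nat.eq_dec n 6) as [-> | Hn6]; [exact harmonic_sq_7|].
  specialize (IH ltac:(lia)).
  rewrite harmonic_S, S_INR.
  assert (HN : 7 <= INR n) by (replace 7 with (INR 7) by (simpl; lra); apply le_INR; lia).
  set (s := harmonic n) in *; set (N := INR n) in *.
  replace (/ (N + 1)) with (1 / (N + 1)) by (field; lra).
  assert (Hsq : 0 <= (2 * s - (N + 1)) ^ 2) by apply pow2_ge_0.
  apply Rmult_le_reg_r with ((N + 1) ^ 2); [nra|].
  replace ((s + 1 / (N + 1)) ^ 2 * (N + 1) ^ 2) with ((s * (N + 1) + 1) ^ 2)
    by (field; lra).
  nra.
Qed.

Definition kl_ratio (n : nat) : R := exp (harmonic n) * ln (harmonic n) / INR n.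

Lemma KL_iff_sigma_ratio_lt n :
  (0 < n)%nat -> KL n <-> INR (sigma n) / INR n < kl_ratio n.
Proof.
  intros Hn; assert (HN : 0 < INR n) by (apply lt_0_INR; exact Hn).
  unfold KL, kl_ratio; split; intros H.
  - apply Rmult_lt_compat_r; [apply Rinv_0_lt_compat|]; assumption.
  - apply Rmult_lt_reg_r with (/ INR n); [apply Rinv_0_lt_compat|]; assumption.
Qed.

(* Writing h = H_n, h' = H_(n+1), N = n + 1: exp h' >= exp h (N+1)/N, so it suffices
   that N^2 ln h <= (N^2 - 1) ln h'; and indeed
   N^2 (ln h' - ln h) >= N^2 (1 - h/h') = N/h' >= h' >= ln h' when h'^2 <= N. *)
Lemma kl_ratio_le_succ n :
  (1 <= n)%nat -> harmonic (S n) ^ 2 <= INR (S n) -> kl_ratio n <= kl_ratio (S n).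
Proof.
  intros Hn Hsq; unfold kl_ratio.
  assert (Hn1 : INR n = INR (S n) - 1) by (rewrite S_INR; ring).
  assert (HN : 2 <= INR (S n))
    by (replace 2 with (INR 2) by (simpl; lra); apply le_INR; lia).
  pose proof (harmonic_ge_1 n Hn) as Hh1.
  rewrite Hn1, harmonic_S in *.
  set (h := harmonic n) in *; set (N := INR (S n)) in *; set (h' := h + / N) in *.
  assert (HinvN : 0 < / N) by (apply Rinv_0_lt_compat; lra).
  assert (Hhh' : h < h') by (unfold h'; lra).
  assert (Hexp : exp h * (1 + / N) <= exp h').
  { unfold h'; rewrite exp_plus.
    apply Rmult_le_compat_l; [left; apply exp_pos | apply exp_ineq1_le]. }
  assert (Hln : 0 <= ln h) by (rewrite <- ln_1; apply ln_le_ln; lra).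
  assert (Hln' : ln h' <= h' - 1) by (apply ln_le_sub_1; lra).
  assert (Hdiff : / (N * h') <= ln h' - ln h).
  { replace (/ (N * h')) with (1 - h / h') by (unfold h'; field; split; nra).
    apply ln_sub_ln_ge; lra. }
  assert (Hkey : N * N * ln h <= (N * N - 1) * ln h').
  { assert (N * N * / (N * h') >= h').
    { replace (N * N * / (N * h')) with (N / h') by (field; lra).
      apply Rle_ge, Rmult_le_reg_r with h'; [lra|].
      unfold Rdiv; rewrite Rmult_assoc, Rinv_l by lra; lra. }
    nra. }
  apply Rle_trans with (exp h * (1 + / N) * ln h' / N).
  - apply Rmult_le_reg_r with ((N - 1) * N * N); [nra|].
    replace (exp h * ln h / (N - 1) * ((N - 1) * N * N))
      with (exp h * (N * N * ln h)) by (field; lra).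
    replace (exp h * (1 + / N) * ln h' / N * ((N - 1) * N * N))
      with (exp h * ((N * N - 1) * ln h')) by (field; lra).
    apply Rmult_le_compat_l; [left; apply exp_pos | exact Hkey].
  - unfold Rdiv; apply Rmult_le_compat_r; [left; exact HinvN|].
    apply Rmult_le_compat_r; [|exact Hexp].
    rewrite <- ln_1; apply ln_le_ln; lra.
Qed.

Lemma kl_ratio_nondecreasing m n : (7 <= m <= n)%nat -> kl_ratio m <= kl_ratio n.
Proof.
  intros [Hm Hmn]; induction Hmn as [|n Hmn IH]; [apply Rle_refl|].
  apply Rle_trans with (kl_ratio n); [exact IH|].
  apply kl_ratio_le_succ; [lia | apply harmonic_sq_le; lia].
Qed.

Lemma exp_mul_ln_le a b : 1 <= a <= b -> exp a * ln a <= exp b * ln b.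
Proof.
  intros [Ha Hab].
  assert (0 <= ln a) by (rewrite <- ln_1; apply ln_le_ln; lra).
  apply Rmult_le_compat; [left; apply exp_pos | assumption | |];
    [apply exp_le_exp | apply ln_le_ln]; lra.
Qed.

Lemma lt_kl_ratio n a A L c :
  (0 < n)%nat -> 1 <= a <= harmonic n -> A <= exp a -> 0 <= L -> exp L <= a ->
  c * INR n < A * L -> c < kl_ratio n.
Proof.
  intros Hn Ha HA HL HLa Hc.
  assert (HN : 0 < INR n) by (apply lt_0_INR; exact Hn).
  assert (Hln : L <= ln a) by (apply le_ln_of_exp_le; lra).
  pose proof (exp_mul_ln_le a (harmonic n) Ha) as Hmono.
  unfold kl_ratio; apply Rmult_lt_reg_r with (INR n); [exact HN|].
  replace (exp (harmonic n) * ln (harmonic n) / INR n * INR n)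
    with (exp (harmonic n) * ln (harmonic n)) by (field; lra).
  apply Rlt_le_trans with (A * L); [exact Hc|].
  apply Rle_trans with (exp a * L); [apply Rmult_le_compat_r; assumption|].
  apply Rle_trans with (exp a * ln a); [|exact Hmono].
  apply Rmult_le_compat_l; [left; apply exp_pos | exact Hln].
Qed.

Lemma kl_ratio_61_gt : 271/100 < kl_ratio 61.
Proof.
  apply (lt_kl_ratio 61 (4695/1000) 108 (1545/1000));
    [lia | pose proof harmonic_61_ge; lra | exact exp_4695_ge | lra
    | exact exp_1545_le | simpl; lra].
Qed.

Lemma kl_ratio_100_gt : 14/5 < kl_ratio 100.
Proof.
  apply (lt_kl_ratio 100 (518/100) 175 (164/100));
    [lia | pose proof harmonic_100_ge; lra | exact exp_518_ge | lra
    | exact exp_164_le | simpl; lra].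
Qed.

Lemma sigma_ratio_le m a b :
  (0 < m)%nat -> (0 < a)%nat -> (a * sigma m <= b * m)%nat ->
  INR (sigma m) / INR m <= INR b / INR a.
Proof.
  intros Hm Ha H; apply le_INR in H; rewrite !mult_INR in H.
  assert (0 < INR m) by (apply lt_0_INR; exact Hm).
  assert (0 < INR a) by (apply lt_0_INR; exact Ha).
  apply Rmult_le_reg_r with (INR m * INR a); [nra|].
  replace (INR (sigma m) / INR m * (INR m * INR a)) with (INR a * INR (sigma m))
    by (field; lra).
  replace (INR b / INR a * (INR m * INR a)) with (INR b * INR m) by (field; lra).
  exact H.
Qed.

Lemma sigma_ratio_le_of_table lo len a b m :
  (0 < lo)%nat -> (0 < a)%nat ->
  forallb (fun k => Nat.leb (a * sigma k) (b * k)) (seq lo len) = true ->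
  (lo <= m < lo + len)%nat -> INR (sigma m) / INR m <= INR b / INR a.
Proof.
  intros Hlo Ha Htable Hm; rewrite forallb_forall in Htable.
  specialize (Htable m ltac:(apply in_seq; lia)); apply Nat.leb_le in Htable.
  apply sigma_ratio_le; lia.
Qed.

Lemma sigma_ratio_le_14_5 m : (1 <= m <= 60)%nat -> INR (sigma m) / INR m <= 14/5.
Proof.
  intros Hm; replace (14/5) with (INR 14 / INR 5) by (simpl; lra).
  apply (sigma_ratio_le_of_table 1 60); [lia | lia | vm_compute; reflexivity | lia].
Qed.

Lemma sigma_ratio_le_61_99 m : (61 <= m <= 99)%nat -> INR (sigma m) / INR m <= 271/100.
Proof.
  intros Hm; replace (271/100) with (INR 271 / INR 100) by (simpl; lra).
  apply (sigma_ratio_le_of_table 61 39); [lia | lia | vm_compute; reflexivity | lia].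
Qed.

Lemma KL_dec n : {KL n} + {~ KL n}.
Proof. apply Rlt_dec. Qed.

Lemma KL_61_99 n : (61 <= n <= 99)%nat -> KL n.
Proof.
  intros Hn; apply KL_iff_sigma_ratio_lt; [lia|].
  apply Rle_lt_trans with (271/100); [apply sigma_ratio_le_61_99, Hn|].
  apply Rlt_le_trans with (kl_ratio 61); [exact kl_ratio_61_gt|].
  apply kl_ratio_nondecreasing; lia.
Qed.

Lemma minimal_counterexample_superabundant n0 :
  (60 < n0)%nat -> ~ KL n0 -> (forall m, (60 < m < n0)%nat -> KL m) ->
  superabundant n0.
Proof.
  intros Hn0 Hnot Hmin.
  assert (H100 : (100 <= n0)%nat).
  { destruct (Nat.le_gt_cases 100 n0) as [|Hlt]; [assumption|].
    exfalso; apply Hnot, KL_61_99; lia. }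
  assert (Hratio : kl_ratio n0 <= INR (sigma n0) / INR n0).
  { apply Rnot_lt_le; intros Hlt; apply Hnot, KL_iff_sigma_ratio_lt; [lia | exact Hlt]. }
  split; [lia|]; intros m Hm.
  apply Rlt_le_trans with (kl_ratio n0); [|exact Hratio].
  destruct (Nat.le_gt_cases m 60) as [Hsmall | Hlarge].
  - apply Rle_lt_trans with (14/5); [apply sigma_ratio_le_14_5; lia|].
    apply Rlt_le_trans with (kl_ratio 100); [exact kl_ratio_100_gt|].
    apply kl_ratio_nondecreasing; lia.
  - apply Rlt_le_trans with (kl_ratio m).
    + apply KL_iff_sigma_ratio_lt, Hmin; lia.
    + apply kl_ratio_nondecreasing; lia.
Qed.

Theorem mainTheorem19 :
  (forall n0 : nat,
      (60 < n0)%nat -> ~ KL n0 ->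
      (forall m : nat, (60 < m < n0)%nat -> KL m) ->
      superabundant n0)
  /\
  ((forall n : nat, (60 < n)%nat -> KL n) <->
   (forall n : nat, (60 < n)%nat -> superabundant n -> KL n)).
Proof.
  split; [exact minimal_counterexample_superabundant|].
  split; [intros HKL n Hn _; exact (HKL n Hn)|].
  intros HKLsa n; induction n as [n IH] using (well_founded_induction Wf_nat.lt_wf).
  intros Hn; destruct (KL_dec n) as [Hkl | Hnot]; [exact Hkl|].
  apply HKLsa; [exact Hn|].
  apply minimal_counterexample_superabundant; [exact Hn | exact Hnot |].
  intros m Hm; apply IH; lia.
Qed.
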